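(* Let $(X,d_X)$ be a discrete countable metric space, $Y$ a countable set, and $d_1,d_2$ two metrics on $X\sqcup Y$ with $d_1|_X=d_2|_X=d_X$ and $d_1|_Y=d_2|_Y$. Then $d_1$ and $d_2$ are coarsely equivalent if and only if $M_{Y,d_1}=M_{Y,d_2}$ (as subsets of $\mathbb B(H_X,H_Y)$).
   Context: $H_X=\ell^2(X)$, $H_Y=\ell^2(Y)$ with standard bases $\{\delta_x\}$, $\{\delta_y\}$. For a metric $d$ on $X\sqcup Y$ extending $d_X$, a bounded operator $T:H_X\to H_Y$ has propagation at most $L$ if $d(x,y)\ge L$ implies $(\delta_y,T\delta_x)=0$; $M_{Y,d}$ is the norm closure in $\mathbb B(H_X,H_Y)$ of bounded operators $H_X\to H_Y$ of finite propagation. Two metrics $d_1,d_2$ on a set $Z$ are coarsely equivalent if there is a monotonically increasing function $\varphi:[0,\infty)\to[0,\infty)$ with $\lim_{t\to\infty}\varphi(t)=\infty$ such that $d_1(z,z')\le\varphi(d_2(z,z'))$ and $d_2(z,z')\le\varphi(d_1(z,z'))$ for all $z,z'\in Z$. *)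

From mathcomp Require Import all_boot all_algebra.
From mathcomp Require Import all_classical all_reals all_analysis.
From mathcomp Require Import complex.
Import GRing.Theory Num.Theory.

Set Implicit Arguments.
Unset Strict Implicit.
Unset Printing Implicit Defensive.

Local Open Scope ring_scope.
Local Open Scope complex_scope.

Section Defs.
Variable R : realType.

Definition is_metric (Z : Type) (d : Z -> Z -> R) : Prop :=
  [/\ (forall z, d z z = 0),
      (forall z z', 0 <= d z z'),
      (forall z z', d z z' = 0 -> z = z'),
      (forall z z', d z z' = d z' z) &
      (forall z1 z2 z3, d z1 z3 <= d z1 z2 + d z2 z3)].

Definition discrete_metric (Z : Type) (d : Z -> Z -> R) : Prop :=
  forall z, exists2 eps : R, 0 < eps & forall z', d z z' < eps -> z' = z.

Definition coarsely_equivalent (Z : Type) (d1 d2 : Z -> Z -> R) : Prop :=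
  exists phi : R -> R,
    [/\ (forall t, 0 <= t -> 0 <= phi t),
        (forall s t, 0 <= s -> s <= t -> phi s <= phi t),
        (forall M : R, exists T : R, forall t, T <= t -> M <= phi t),
        (forall z z', d1 z z' <= phi (d2 z z')) &
        (forall z z', d2 z z' <= phi (d1 z z'))].

Definition sqmod (z : R[i]) : R := complex.Re z ^+ 2 + complex.Im z ^+ 2.

Definition l2norm2 (T : countType) (f : T -> R[i]) : \bar R :=
  (\esum_(t in [set: T]) (sqmod (f t))%:E)%E.

Definition is_l2 (T : countType) (f : T -> R[i]) : Prop :=
  (l2norm2 f < +oo)%E.

Definition delta (T : countType) (x : T) : T -> R[i] :=
  fun t => if t == x then 1 else 0.

(** Bounded operators l^2(X) -> l^2(Y).  An operator is represented by a map
    (X -> C) -> (Y -> C); only its restriction to l^2(X) is relevant. *)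
Definition bounded_op (X Y : countType) (T : (X -> R[i]) -> (Y -> R[i])) : Prop :=
  [/\ (forall f, is_l2 f -> is_l2 (T f)),
      (forall (a : R[i]) f g, is_l2 f -> is_l2 g ->
          T (fun x => a * f x + g x) = (fun y => a * T f y + T g y)) &
      (exists c : R, forall f, is_l2 f -> (l2norm2 (T f) <= c%:E * l2norm2 f)%E)].

Definition propagation_le (X Y : countType) (d : X + Y -> X + Y -> R)
    (T : (X -> R[i]) -> (Y -> R[i])) (L : R) : Prop :=
  forall x y, L <= d (inl x) (inr y) -> T (delta x) y = 0.

Definition finite_propagation (X Y : countType) (d : X + Y -> X + Y -> R)
    (T : (X -> R[i]) -> (Y -> R[i])) : Prop :=
  exists L : R, propagation_le d T L.

(* M_{Y,d}: norm closure in B(H_X,H_Y) of finite propagation bounded operators;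
    ||T - S|| <= eps is expressed as ||(T - S) f||^2 <= eps^2 ||f||^2 on l^2. *)
Definition M_Yd (X Y : countType) (d : X + Y -> X + Y -> R)
    (T : (X -> R[i]) -> (Y -> R[i])) : Prop :=
  bounded_op T /\
  forall eps : R, 0 < eps ->
    exists S : (X -> R[i]) -> (Y -> R[i]),
      [/\ bounded_op S, finite_propagation d S &
          forall f, is_l2 f ->
            (l2norm2 (fun y => (T f y - S f y)%R) <= (eps ^+ 2)%:E * l2norm2 f)%E].

End Defs.

(* (=>) If d2 <= phi o d1 with phi monotone, an operator of d1-propagation
        at most L has d2-propagation at most phi(max L 0) + 1, so finite
        propagation, and hence M_{Y,-}, transfers from d1 to d2.
   (<=) Assume M_{Y,d2} is contained in M_{Y,d1}.  If d1 were unbounded on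
        some d2-ball of radius n, there would be pairs (x_k, y_k) with
        d2(x_k, y_k) <= n and d1(x_k, y_k) growing so fast that the x_k
        and the y_k are pairwise distinct.  The partial isometry sending
        delta_{x_k} to delta_{y_k} has d2-propagation <= n + 1, yet it has
        matrix entries 1 at d1-distances tending to infinity, which
        no operator of M_{Y,d1} can have.  So d1 is bounded on d2-balls and
        vice versa; from these bounds one builds an explicit control
        function witnessing coarse equivalence. *)

From mathcomp Require Import all_boot all_algebra.
From mathcomp Require Import all_classical all_reals all_analysis.
From mathcomp Require Import complex lra.
Import order.Order.TTheory GRing.Theory Num.Theory.

Set Implicit Arguments.
Unset Strict Implicit.
Unset Printing Implicit Defensive.
Local Open Scope ring_scope.
Local Open Scope complex_scope.

Section L2.
Variable R : realType.

Lemma sqmod_ge0 (z : R[i]) : 0 <= sqmod z.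
Proof. by rewrite /sqmod addr_ge0 // sqr_ge0. Qed.

Lemma sqmod0 : sqmod (0 : R[i]) = 0.
Proof. by rewrite /sqmod /= expr0n /= addr0. Qed.

Lemma sqmod1 : sqmod (1 : R[i]) = 1.
Proof. by rewrite /sqmod /= expr1n expr0n /= addr0. Qed.

Lemma l2norm2_ge0 (T : countType) (f : T -> R[i]) : (0 <= l2norm2 f)%E.
Proof. by apply: esum_ge0 => x _; rewrite lee_fin sqmod_ge0. Qed.

Lemma l2norm2_zero (T : countType) : l2norm2 (fun _ : T => (0 : R[i])) = 0%E.
Proof. by apply: esum1 => x _; rewrite sqmod0. Qed.

Lemma l2norm2_delta (T : countType) (x : T) : l2norm2 (delta R x) = 1%E.
Proof.
rewrite /l2norm2.
transitivity (\esum_(t in [set x]) (sqmod (delta R x t))%:E)%E.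
  rewrite [RHS]esum_mkcond; apply: eq_esum => t _.
  rewrite /delta; case: (eqVneq t x) => [->|ne]; first by rewrite mem_set.
  by rewrite memNset ?sqmod0 // => tx; move: ne; rewrite tx eqxx.
by rewrite esum_set1 ?lee_fin ?sqmod_ge0 // /delta eqxx sqmod1.
Qed.

Lemma is_l2_delta (T : countType) (x : T) : is_l2 (delta R x).
Proof. by rewrite /is_l2 l2norm2_delta ltry. Qed.

Lemma l2norm2_ge_pt (T : countType) (f : T -> R[i]) t :
  ((sqmod (f t))%:E <= l2norm2 f)%E.
Proof.
apply: esum_ge; exists [set t]%classic; first by split => //; exact: finite_set1.
by rewrite fsbig_set1.
Qed.

End L2.

Section PropagationModule.
Variables (R : realType) (X Y : countType).
Implicit Types (d : X + Y -> X + Y -> R) (T : (X -> R[i]) -> (Y -> R[i])).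

Lemma finite_propagation_M_Yd d T :
  bounded_op T -> finite_propagation d T -> M_Yd d T.
Proof.
move=> bT fpT; split => // eps _; exists T; split => // f _.
have -> : (fun y => T f y - T f y) = fun=> 0 by apply/funext => y; rewrite subrr.
by rewrite l2norm2_zero mule_ge0 ?l2norm2_ge0 // lee_fin sqr_ge0.
Qed.

(* The matrix entries (delta_y, T delta_x) of T in M_{Y,d} become small
   when d(x, y) is large: T is close to an operator with vanishing entries
   there. *)
Lemma M_Yd_entries_small d T eps : M_Yd d T -> 0 < eps ->
  exists L, forall x y, L <= d (inl x) (inr y) ->
    sqmod (T (delta R x) y) <= eps ^+ 2.
Proof.
move=> [_ approxT] eps_gt0; have [S [_ [L propS] closeS]] := approxT eps eps_gt0.
exists L => x y farxy.
have := le_trans (l2norm2_ge_pt _ y) (closeS _ (is_l2_delta R x)).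
by rewrite l2norm2_delta mule1 propS // subr0 lee_fin.
Qed.

Lemma propagation_le_transfer d1 d2 (phi : R -> R) T L :
  (forall s t, 0 <= s -> s <= t -> phi s <= phi t) ->
  (forall z z', d2 z z' <= phi (d1 z z')) ->
  (forall z z', 0 <= d1 z z') ->
  propagation_le d1 T L -> propagation_le d2 T (phi (Num.max L 0) + 1).
Proof.
move=> phi_mono d2_le d1_ge0 propT x y far2; apply: propT.
rewrite leNgt; apply/negP => near1.
have : d2 (inl x) (inr y) <= phi (Num.max L 0).
  by apply: le_trans (d2_le _ _) (phi_mono _ _ (d1_ge0 _ _) _); rewrite le_max ltW.
lra.
Qed.

Lemma M_Yd_transfer d1 d2 (phi : R -> R) T :
  (forall s t, 0 <= s -> s <= t -> phi s <= phi t) ->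
  (forall z z', d2 z z' <= phi (d1 z z')) ->
  (forall z z', 0 <= d1 z z') ->
  M_Yd d1 T -> M_Yd d2 T.
Proof.
move=> phi_mono d2_le d1_ge0 [bT approxT]; split => // eps eps_gt0.
have [S [bS [L propS] closeS]] := approxT eps eps_gt0; exists S; split => //.
by exists (phi (Num.max L 0) + 1); exact: propagation_le_transfer propS.
Qed.

End PropagationModule.

(* For injective families u : I -> X and v : I -> Y, the partial isometry
   sending delta_{u i} to delta_{v i}; 'pinv inverts v on its range. *)
Section Transport.
Variables (R : realType) (X Y : countType) (I : choiceType) (i0 : I).
Variables (u : I -> X) (v : I -> Y).
Hypotheses (u_inj : injective u) (v_inj : injective v).

Definition transport (f : X -> R[i]) (y : Y) : R[i] :=
  if y \in range v then f (u ('pinv_(fun=> i0) [set: I] v y)) else 0.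

Lemma transport_image f i : transport f (v i) = f (u i).
Proof.
rewrite /transport mem_set; last by exists i.
by rewrite pinvKV ?in_setT // => a b _ _; exact: v_inj.
Qed.

Lemma transport_outside f y : ~ range v y -> transport f y = 0.
Proof. by move=> notv; rewrite /transport memNset. Qed.

Lemma transport_delta_support x y :
  transport (delta R x) y != 0 -> exists i, x = u i /\ y = v i.
Proof.
have [[i _ <-]|notv] := pselect (range v y); last by rewrite transport_outside ?eqxx.
rewrite transport_image /delta.
by case: (eqVneq (u i) x) => [<-|_]; [exists i | rewrite eqxx].
Qed.

Lemma transport_propagation d L :
  (forall i, d (inl (u i)) (inr (v i)) < L) -> propagation_le d transport L.
Proof.
move=> near x y far; apply/eqP/contraT => /transport_delta_support [i [ex ey]].
by have := near i; rewrite -ex -ey; lra.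
Qed.

(* The transport operator is a contraction, by reindexing the sums along v and u. *)
Lemma transport_norm f : (l2norm2 (transport f) <= l2norm2 f)%E.
Proof.
rewrite /l2norm2.
have -> : (\esum_(y in [set: Y]) (sqmod (transport f y))%:E =
           \esum_(y in range v) (sqmod (transport f y))%:E)%E.
  rewrite [RHS]esum_mkcond; apply: eq_esum => y _.
  have [yv|notv] := pselect (range v y); first by rewrite mem_set.
  by rewrite memNset // transport_outside // sqmod0.
rewrite esum_image; last by move=> a b _ _; exact: v_inj.
under eq_esum do rewrite transport_image.
rewrite -(esum_image _ u (fun x => (sqmod (f x))%:E)); last first.
  by move=> a b _ _; exact: u_inj.
rewrite [X in (X <= _)%E]esum_mkcond; apply: le_esum => x _.
by case: ifP => _ //; rewrite lee_fin sqmod_ge0.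
Qed.

Lemma transport_bounded : bounded_op transport.
Proof.
split.
- by move=> f; rewrite /is_l2 => f_l2; apply: le_lt_trans f_l2; exact: transport_norm.
- move=> a f g _ _; apply/funext => y; rewrite /transport.
  by case: ifP => _ //; rewrite mulr0 addr0.
- by exists 1 => f _; rewrite mul1e; exact: transport_norm.
Qed.

End Transport.

Lemma sparse_sequence (R : realType) (A : Type) (P : A -> Prop) (s : A -> R)
    (c : R) :
  0 <= c -> (forall B, exists a, P a /\ B < s a) ->
  exists a : nat -> A,
    [/\ forall k, P (a k), forall k, k%:R < s (a k) &
        forall j k, (j < k)%N -> s (a j) + c < s (a k)].
Proof.
move=> c_ge0 unbounded; have [g gP] := choice unbounded.
pose a k := iter k (fun b => g (s b + c + 1)) (g 0).
have step k : s (a k) + c + 1 < s (a k.+1) := (gP _).2.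
exists a; split.
- by case=> [|k]; exact: (gP _).1.
- elim=> [|k IH]; first exact: (gP 0).2.
  by rewrite -natr1; have := step k; lra.
- move=> j; elim=> // k IH; rewrite ltnS leq_eqVlt => /orP[/eqP->|/IH jk].
    by have := step k; lra.
  by have := step k; lra.
Qed.

Lemma injective_of_lt_neq (A : Type) (w : nat -> A) :
  (forall j k, (j < k)%N -> w j <> w k) -> injective w.
Proof.
move=> neq j k e; case: (ltngtP j k) => // jk; first by case: (neq _ _ jk).
by case: (neq _ _ jk).
Qed.

Definition ball_bounded (R : realType) (Z : Type) (d1 d2 : Z -> Z -> R) (n : R)
  : Prop :=
  exists B, forall z z', d2 z z' <= n -> d1 z z' <= B.

Section TwoMetrics.
Variables (R : realType) (X Y : countType) (d1 d2 : X + Y -> X + Y -> R).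
Hypotheses (m1 : is_metric d1) (m2 : is_metric d2).
Hypothesis agreeX : forall x x', d1 (inl x) (inl x') = d2 (inl x) (inl x').
Hypothesis agreeY : forall y y', d1 (inr y) (inr y') = d2 (inr y) (inr y').

(* If d1 is unbounded on d2-balls of radius n, the unboundedness is
   witnessed by pairs (x, y) in X * Y, since d1 = d2 on X and on Y. *)
Lemma far_pairs n : ~ ball_bounded d1 d2 n ->
  forall B, exists p : X * Y,
    d2 (inl p.1) (inr p.2) <= n /\ B < d1 (inl p.1) (inr p.2).
Proof.
case: m1 => [_ _ _ d1_sym _]; case: m2 => [_ _ _ d2_sym _].
move=> unbounded B; apply: contrapT => nofar; apply: unbounded.
exists (Num.max B n) => z z' near2; rewrite leNgt gt_max; apply/negP => /andP[far1 gtn].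
case: z z' near2 far1 gtn => [x|y] [x'|y'] near2 far1 gtn.
- by rewrite agreeX in gtn; lra.
- by apply: nofar; exists (x, y').
- by apply: nofar; exists (x', y); rewrite /= d1_sym d2_sym.
- by rewrite agreeY in gtn; lra.
Qed.

Lemma separated_pairs_distinct n x y x' y' :
  d2 (inl x) (inr y) <= n -> d2 (inl x') (inr y') <= n ->
  d1 (inl x) (inr y) + 2 * n < d1 (inl x') (inr y') -> x <> x' /\ y <> y'.
Proof.
case: m1 => [_ _ _ _ d1_tri]; case: m2 => [_ _ _ d2_sym d2_tri].
move=> near near' sep; split => [ex|ey].
- have := d1_tri (inl x) (inr y) (inr y'); have := d2_tri (inr y) (inl x) (inr y').
  by rewrite agreeY (d2_sym (inr y) (inl x)) -ex in near' sep *; lra.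
- have := d1_tri (inl x') (inl x) (inr y); have := d2_tri (inl x') (inr y) (inl x).
  by rewrite agreeX (d2_sym (inr y) (inl x)) -ey in near' sep *; lra.
Qed.

(* Otherwise a transport operator along sparse far pairs lies
   in M_{Y,d2} but has entries 1 at arbitrarily large d1-distance. *)
Lemma ball_bounded_of_inclusion :
  (forall T, M_Yd d2 T -> M_Yd d1 T) -> forall n, 0 <= n -> ball_bounded d1 d2 n.
Proof.
move=> incl n n_ge0; apply: contrapT => unbounded.
have [p [near far sep]] := @sparse_sequence R _
  (fun p : X * Y => d2 (inl p.1) (inr p.2) <= n)
  (fun p => d1 (inl p.1) (inr p.2)) (2 * n) ltac:(lra) (far_pairs unbounded).
pose u k := (p k).1; pose v k := (p k).2.
have distinct j k : (j < k)%N -> u j <> u k /\ v j <> v k.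
  by move=> jk; exact: separated_pairs_distinct (near j) (near k) (sep j k jk).
have u_inj : injective u.
  by apply: injective_of_lt_neq => j k /distinct [].
have v_inj : injective v.
  by apply: injective_of_lt_neq => j k /distinct [].
pose T := @transport R X Y nat 0%N u v.
have T_M2 : M_Yd d2 T.
  apply: finite_propagation_M_Yd; first exact: transport_bounded.
  exists (n + 1); apply: (transport_propagation _ v_inj) => k.
  by have := near k; rewrite /u /v; lra.
have [L small] := M_Yd_entries_small (incl _ T_M2) (ltac:(lra) : 0 < 1 / 2 :> R).
pose k := (Num.truncn L).+1.
have far_k : L <= d1 (inl (u k)) (inr (v k)).
  by have := truncnS_gt L; have := far k; rewrite /u /v /k; lra.
have := small _ _ far_k; rewrite /T transport_image // /delta eqxx sqmod1 expr2.
lra.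
Qed.

End TwoMetrics.

(* control B t = t + sum_{i <= floor t + 1} |B i| is a monotone function
   dominating the identity and every B at the next integer above t. *)
Section ControlFunction.
Variable R : realType.

Definition control (B : nat -> R) (t : R) : R :=
  t + \sum_(0 <= i < (Num.truncn t).+2) `|B i|.

Lemma control_ge (B : nat -> R) t : t <= control B t.
Proof. by rewrite /control lerDl sumr_ge0. Qed.

Lemma control_mono (B : nat -> R) s t :
  0 <= s -> s <= t -> control B s <= control B t.
Proof.
move=> s_ge0 st; rewrite /control lerD //.
have le_idx : ((Num.truncn s).+2 <= (Num.truncn t).+2)%N.
  by rewrite ltnS ltnS le_truncn.
by rewrite (@big_cat_nat _ _ _ (Num.truncn s).+2 0 _ _ _ (leq0n _) le_idx) /=
  lerDl sumr_ge0.
Qed.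

Lemma le_control (Z : Type) (da db : Z -> Z -> R) (B : nat -> R) :
  (forall z z', 0 <= db z z') ->
  (forall (n : nat) z z', db z z' <= n%:R -> da z z' <= B n) ->
  forall z z', da z z' <= control B (db z z').
Proof.
move=> db_ge0 bounded z z'; set t := db z z'.
have := bounded (Num.truncn t).+1 z z' (ltW (truncnS_gt t)).
have : `|B (Num.truncn t).+1| <= \sum_(0 <= i < (Num.truncn t).+2) `|B i|.
  by rewrite big_nat_recr //= lerDr sumr_ge0.
have := ler_norm (B (Num.truncn t).+1); have := db_ge0 z z'.
rewrite /control -/t; lra.
Qed.

End ControlFunction.

Lemma coarse_of_ball_bounded (R : realType) (Z : Type) (d1 d2 : Z -> Z -> R) :
  (forall z z', 0 <= d1 z z') -> (forall z z', 0 <= d2 z z') ->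
  (forall n : nat, ball_bounded d1 d2 n%:R) ->
  (forall n : nat, ball_bounded d2 d1 n%:R) ->
  coarsely_equivalent d1 d2.
Proof.
move=> d1_ge0 d2_ge0 bounded12 bounded21.
have [B1 B1P] := choice bounded12; have [B2 B2P] := choice bounded21.
pose B n := Num.max (B1 n) (B2 n).
exists (control B); split.
- by move=> t t_ge0; apply: le_trans t_ge0 (control_ge _ _).
- exact: control_mono.
- by move=> M; exists M => t Mt; apply: le_trans Mt (control_ge _ _).
- apply: le_control => // n z z' near.
  by apply: le_trans (B1P n z z' near) _; rewrite le_max lexx.
- apply: le_control => // n z z' near.
  by apply: le_trans (B2P n z z' near) _; rewrite le_max lexx orbT.
Qed.

(* The metric on X enters only through the agreement d1 = d2 on X. *)
Theorem mainTheorem4 (R : realType) (X Y : countType)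
    (dX : X -> X -> R) (d1 d2 : X + Y -> X + Y -> R) :
  is_metric dX -> discrete_metric dX ->
  is_metric d1 -> is_metric d2 ->
  (forall x x', d1 (inl x) (inl x') = dX x x') ->
  (forall x x', d2 (inl x) (inl x') = dX x x') ->
  (forall y y', d1 (inr y) (inr y') = d2 (inr y) (inr y')) ->
  coarsely_equivalent d1 d2 <->
  (forall T : (X -> R[i]) -> (Y -> R[i]), M_Yd d1 T <-> M_Yd d2 T).
Proof.
move=> _ _ m1 m2 d1X d2X agreeY.
have agreeX x x' : d1 (inl x) (inl x') = d2 (inl x) (inl x') by rewrite d1X d2X.
have d1_ge0 : forall z z', 0 <= d1 z z' by case: m1.
have d2_ge0 : forall z z', 0 <= d2 z z' by case: m2.
split.
- move=> [phi [_ phi_mono _ le12 le21]] T.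
  by split; apply: M_Yd_transfer phi_mono _ _.
- move=> sameM; apply: coarse_of_ball_bounded => // n.
  + by apply: (ball_bounded_of_inclusion m1 m2 agreeX agreeY) => // T /sameM.
  + by apply: (ball_bounded_of_inclusion m2 m1 (fun x x' => esym (agreeX x x'))
      (fun y y' => esym (agreeY y y'))) => // T /sameM.
Qed.
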